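(* Let $k\ge2$ and let $G=(\{a,b\},\varphi,a)$ be a circular D0L-system with $\varphi$ $k$-uniform. Then the graph of overhangs $GO_G$ does not contain two distinct vertices $s_1,s_2$ with an edge from $s_1$ to $s_2$, an edge from $s_2$ to $s_1$, and a loop on $s_1$ or on $s_2$.
   Context: A D0L-system $G=(\mathcal{A},\varphi,w)$ has $L(G)=\{\varphi^n(w)\}$ and $S(L(G))$ the set of factors of its words. An interpretation of $u\in S(L(G))$ is $(p,v,s)$ with $v\in S(L(G))$, $\varphi(v)=pus$. With $v=v_1\cdots v_n$, $v'=v'_1\cdots v'_m$, $u=u_1\cdots u_\ell$, interpretations $(p,v,s),(p',v',s')$ are synchronized at position $j$ if $\varphi(v_1\cdots v_i)=pu_1\cdots u_j$ and $\varphi(v'_1\cdots v'_{i'})=p'u_1\cdots u_j$ for some $i,i'$; $u$ has a synchronizing point at $j$ if all its interpretations are pairwise synchronized at $j$. A PD0L-system injective on $S(L(G))$ is circular if there is $Z$ such that every $u\in S(L(G))$ with $|u|>Z$ has a synchronizing point. $\varphi$ is $k$-uniform if $|\varphi(a)|=|\varphi(b)|=k$. Let $X=\{\varphi(a),\varphi(b)\}$. An overhang is a triple $(u_1\cdots u_m,v_1\cdots v_n,|x|)$ with $u_i,v_j\in X$, $x$ nonempty, such that: (i) $x$ is a suffix of $u_1\cdots u_m$ but not of $u_2\cdots u_m$; (ii) $x$ is a prefix of $v_1\cdots v_n$ but not of $v_1\cdots v_{n-1}$; (iii) $x\ne u_1\cdots u_m$ or $x\ne v_1\cdots v_n$; (iv)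 $|v_1\cdots v_{n-1}|<|x(u_2\cdots u_m)^{-1}|$. Its left overhang is $u_1\cdots u_mx^{-1}$, right overhang $x^{-1}v_1\cdots v_n$. $GO_G$ has an edge from $s_1$ to $s_2$ labelled by each overhang with left overhang $s_1$ and right overhang $s_2$. *)

From HB Require Import structures.
From mathcomp Require Import all_boot.
Set Implicit Arguments. Unset Strict Implicit. Unset Printing Implicit Defensive.

Inductive ab := a | b.

Definition ab_eqb (x y : ab) : bool :=
  match x, y with a, a | b, b => true | _, _ => false end.
Lemma ab_eqP : Equality.axiom ab_eqb.
Proof. by case; case; constructor. Qed.
HB.instance Definition _ := hasDecEq.Build ab ab_eqP.

Definition word := seq ab.

Definition phiw (phi : ab -> word) (w : word) : word := flatten (map phi w).

(* u is in S(L(G)) for G = ({a,b}, phi, a): u is a factor of some phi^n(a). *)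
Definition factor (phi : ab -> word) (u : word) : Prop :=
  exists n, infix u (iter n (phiw phi) [:: a]).

Definition interp (phi : ab -> word) (u p v s : word) : Prop :=
  factor phi v /\ phiw phi v = p ++ u ++ s.

Definition synchronized (phi : ab -> word) (u : word) (j : nat)
  (p v p' v' : word) : Prop :=
  exists i i', phiw phi (take i v) = p ++ take j u /\
               phiw phi (take i' v') = p' ++ take j u.

Definition sync_point (phi : ab -> word) (u : word) (j : nat) : Prop :=
  j <= size u /\
  forall p v s p' v' s', interp phi u p v s -> interp phi u p' v' s' ->
    synchronized phi u j p v p' v'.

Definition circular (phi : ab -> word) : Prop :=
  (forall c, phi c <> [::]) /\
  (forall u v, factor phi u -> factor phi v -> phiw phi u = phiw phi v -> u = v) /\
  exists Z, forall u, factor phi u -> Z < size u -> exists j, sync_point phi u j.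

Definition k_uniform (phi : ab -> word) (k : nat) : Prop :=
  size (phi a) = k /\ size (phi b) = k.

Definition inX (phi : ab -> word) (w : word) : Prop := w = phi a \/ w = phi b.

(* The list U = [u_1; ...; u_m], V = [v_1; ...; v_n] and x give an overhang
   (u_1...u_m, v_1...v_n, |x|). *)
Definition overhang (phi : ab -> word) (U V : seq word) (x : word) : Prop :=
  (forall w, w \in U -> inX phi w) /\
  (forall w, w \in V -> inX phi w) /\
  x <> [::] /\
  suffix x (flatten U) /\ ~~ suffix x (flatten (behead U)) /\
  prefix x (flatten V) /\ ~~ prefix x (flatten (take (size V).-1 V)) /\
  (x <> flatten U \/ x <> flatten V) /\
  size (flatten (take (size V).-1 V)) < size x - size (flatten (behead U)).

Definition left_overhang (U : seq word) (x : word) : word :=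
  take (size (flatten U) - size x) (flatten U).
Definition right_overhang (V : seq word) (x : word) : word :=
  drop (size x) (flatten V).

Definition GO_edge (phi : ab -> word) (s1 s2 : word) : Prop :=
  exists U V x, overhang phi U V x /\
    left_overhang U x = s1 /\ right_overhang V x = s2.

(* When |phi a| = |phi b| = k, condition (iv) forces both sides of an
   overhang to be a single image, so an edge s1 -> s2 of GO_G only says that
   s1 x and x s2 lie in X = {phi a, phi b} for some nonempty x.  Given edges
   s1 -> s2 -> s1 with s1 <> s2 and a loop at s1, the words s1 x and s2 y are
   the two elements of X; this forces the loop and the back edge to use the
   same x, whence {s1 x, s2 x} = X = {x s1, x s2}.  Then either s1 and s2 both
   commute with x, or x s1 = s2 x and x s2 = s1 x and both commute with x x;
   two words of equal length commuting with the same nonempty word are equal. *)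

From mathcomp Require Import all_boot zify.

Set Implicit Arguments.
Unset Strict Implicit.
Unset Printing Implicit Defensive.

Section WordEquations.
Variable T : eqType.
Implicit Types s t w z x : seq T.

Lemma cat_eq_size_l s1 s2 t1 t2 :
  size s1 = size s2 -> s1 ++ t1 = s2 ++ t2 -> s1 = s2 /\ t1 = t2.
Proof. by move=> Hs /eqP; rewrite eqseq_cat // => /andP[/eqP-> /eqP->]. Qed.

Lemma cat_eq_size_r s1 s2 t1 t2 :
  size t1 = size t2 -> s1 ++ t1 = s2 ++ t2 -> s1 = s2 /\ t1 = t2.
Proof.
move=> Ht E; have Hs : size s1 = size s2.
  by have := congr1 size E; rewrite !size_cat Ht => /addIn.
exact: cat_eq_size_l Hs E.
Qed.

Definition wpow n w := flatten (nseq n w).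

Lemma size_wpow n w : size (wpow n w) = n * size w.
Proof. by rewrite size_flatten /shape map_nseq sumn_nseq mulnC. Qed.

Lemma wpow_commute n w z : w ++ z = z ++ w -> wpow n w ++ z = z ++ wpow n w.
Proof.
move=> wz; elim: n => [|n IHn] /=; first by rewrite cats0.
by rewrite -catA IHn catA wz catA.
Qed.

Lemma wpow_size_swap w z : w ++ z = z ++ w -> wpow (size z) w = wpow (size w) z.
Proof.
move=> wz; have := wpow_commute (size w) (esym (wpow_commute (size z) wz)).
by case/cat_eq_size_l; rewrite ?size_wpow // mulnC.
Qed.

Lemma commuting_eq_size w w' z :
  z != [::] -> size w = size w' ->
  w ++ z = z ++ w -> w' ++ z = z ++ w' -> w = w'.
Proof.
case: z => [//|c z] _ sw wz w'z.
have := wpow_size_swap wz; rewrite sw -(wpow_size_swap w'z) /=.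
by case/cat_eq_size_l.
Qed.

Lemma conjugate_swap_eq s1 s2 x :
  x != [::] -> size s1 = size s2 ->
  x ++ s1 = s2 ++ x -> x ++ s2 = s1 ++ x -> s1 = s2.
Proof.
move=> x0 s12 E1 E2; apply: (@commuting_eq_size _ _ (x ++ x)) => //.
- by case: x x0 {E1 E2}.
- by rewrite catA -E2 -catA -E1 catA.
- by rewrite catA -E1 -catA -E2 catA.
Qed.

End WordEquations.

Section UniformOverhangs.
Variables (phi : ab -> word) (k : nat).
Hypothesis phi_uniform : k_uniform phi k.

Lemma size_inX w : inX phi w -> size w = k.
Proof. by case: phi_uniform => sa sb [->|->]. Qed.

Lemma size_flatten_inX W :
  (forall w, w \in W -> inX phi w) -> size (flatten W) = k * size W.
Proof.
elim: W => [|w W IHW] WX /=; first by rewrite muln0.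
rewrite size_cat IHW => [|w' w'W]; last by apply: WX; rewrite inE w'W orbT.
by rewrite size_inX ?mulnS //; apply/WX/mem_head.
Qed.

Lemma overhang_singletons U V x :
  overhang phi U V x -> exists u v, U = [:: u] /\ V = [:: v].
Proof.
case=> UX [VX [x0 [sxU [_ [pxV [_ [_ iv]]]]]]].
have sU := size_flatten_inX UX; have sV := size_flatten_inX VX.
have sbU : size (flatten (behead U)) = k * (size U).-1.
  by rewrite size_flatten_inX ?size_behead // => w /mem_behead; apply: UX.
have stV : size (flatten (take (size V).-1 V)) = k * (size V).-1.
  by rewrite size_flatten_inX ?size_takel ?leq_pred // => w /mem_take; apply: VX.
rewrite sbU stV in iv.
have xU : size x <= k * size U.
  by rewrite -sU; case/suffixP: sxU => t ->; rewrite size_cat leq_addl.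
have xV : size x <= k * size V.
  by rewrite -sV; case/prefixP: pxV => t ->; rewrite size_cat leq_addr.
have x_pos : 0 < size x by case: x x0 {sxU pxV xU xV iv}.
have [U1 V1] : size U = 1 /\ size V = 1 by nia.
case: U {UX sxU sU sbU iv xU} U1 => [|u [|]] // _.
by case: V {VX pxV sV stV xV} V1 => [|v [|]] // _; exists u, v.
Qed.

Lemma GO_edge_inX s1 s2 :
  GO_edge phi s1 s2 -> exists2 x, x != [::] & inX phi (s1 ++ x) /\ inX phi (x ++ s2).
Proof.
case=> U [V [x [ov [<- <-]]]].
have [u [v [? ?]]] := overhang_singletons ov; subst U V.
case: ov => uX [vX [x0 [/= sxu [_ [pxv _]]]]].
exists x; first exact/eqP.
rewrite /left_overhang /right_overhang /= !cats0 in sxu pxv *.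
case/suffixP: sxu uX => t ->; case/prefixP: pxv vX => t' ->.
rewrite size_cat addnK take_size_cat ?drop_size_cat // => vX uX.
by split; [apply: uX | apply: vX]; rewrite mem_head.
Qed.

Lemma inX_other w1 w2 w :
  inX phi w1 -> inX phi w2 -> inX phi w -> w1 <> w2 -> w = w1 \/ w = w2.
Proof. by do 3 case=> ->; auto. Qed.

Lemma no_digon_with_loop s1 s2 :
  s1 <> s2 -> GO_edge phi s1 s2 -> GO_edge phi s2 s1 -> ~ GO_edge phi s1 s1.
Proof.
move=> s12 /GO_edge_inX[x x0 [s1x xs2]] /GO_edge_inX[y _ [s2y ys1]].
case/GO_edge_inX=> z _ [s1z zs1].
have ss : size s1 = size s2.
  by have := size_inX s1x; have := size_inX xs2; rewrite !size_cat; lia.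
have s1x_s2y : s1 ++ x <> s2 ++ y by case/(cat_eq_size_l ss).
have zx : z = x.
  have [/(cat_eq_size_l (erefl _))[]|/(cat_eq_size_l ss)[]] // :=
    inX_other s1x s2y s1z s1x_s2y.
subst z; move: zs1 => xs1.
have xs1_xs2 : x ++ s1 <> x ++ s2 by case/(cat_eq_size_l (erefl _)).
have yx : y = x.
  have [/(cat_eq_size_r (erefl _))[]|/(cat_eq_size_r ss)[]] // :=
    inX_other xs1 xs2 ys1 xs1_xs2.
subst y.
have [E1|E1] := inX_other s1x s2y xs1 s1x_s2y;
  have [E2|E2] := inX_other s1x s2y xs2 s1x_s2y.
- by apply: xs1_xs2; rewrite E1 E2.
- exact: s12 (commuting_eq_size x0 ss (esym E1) (esym E2)).
- exact: s12 (conjugate_swap_eq x0 ss E1 E2).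
- by apply: xs1_xs2; rewrite E1 E2.
Qed.

End UniformOverhangs.

Theorem mainTheorem7 (phi : ab -> word) (k : nat) :
  2 <= k -> k_uniform phi k -> circular phi ->
  ~ exists s1 s2 : word, s1 <> s2 /\
      GO_edge phi s1 s2 /\ GO_edge phi s2 s1 /\
      (GO_edge phi s1 s1 \/ GO_edge phi s2 s2).
Proof.
move=> _ phi_uniform _ [s1 [s2 [s12 [e12 [e21 [e11|e22]]]]]].
  exact: (no_digon_with_loop phi_uniform s12 e12 e21).
by apply: (no_digon_with_loop phi_uniform _ e21 e12) => // /esym.
Qed.
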